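(* Let $\mathbb{L}$ be the projective Fraïssé limit of $\mathcal{F}^{(n)}$, let $i\in[n]$ and let $b$ be a clopen subset of $L$ with $p_i^{\mathbb{L}}\in b$. Then there exists a clopen set $c$ with $p_i^{\mathbb{L}}\in c\subseteq b$ such that $c$ is a union of connected components of $\mathbb{L}$.
   Context: Fix $m\in\mathbb{N}$, $n\ge0$; $\sigma^{(n)}=\{s_1,\dots,s_m,p_1,\dots,p_n\}$ with $s_i$ binary relation symbols and $p_j$ constants. A topological structure is a zero-dimensional compact second countable space with closed sets for the $s_i$ and points for the $p_j$; finite ones are discrete. An epimorphism is a continuous surjection $\phi$ with $\phi(s_i^{\mathbb{A}})=s_i^{\mathbb{B}}$ and $\phi(p_j^{\mathbb{A}})=p_j^{\mathbb{B}}$. A binary relation $s$ on $A$ is surjective if each $a$ has $b,c$ with $(a,b),(c,a)\in s$; $a$ is outgoing for $s$ if $|\{b:(b,a)\in s\}|=1$ and $|\{b:(a,b)\in s\}|\ge2$. $\mathcal{F}$: finite $\{s_1,\dots,s_m\}$-structures with all $s_i$ surjective such that (i) every point is outgoing for exactly one of $s_1,s_1^{-1},\dots,s_m,s_m^{-1}$, (ii) if $(a,b)\in s_i$ then $a$ is $s_i$-outgoing or $b$ is $s_i^{-1}$-outgoing. $\mathbb{A}^{(n)}$: universe $A\sqcup[n]$, $s_i^{\mathbb{A}^{(n)}}=s_i^{\mathbb{A}}\cup\{(j,j):j\in[n]\}$, $p_j^{\mathbb{A}^{(n)}}=j$; $\mathcal{F}^{(n)}=\{\mathbb{A}^{(n)}:\mathbb{A}\in\mathcal{F}\}$.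 The projective Fraïssé limit $\mathbb{L}$ of $\mathcal{F}^{(n)}$ (exists, unique up to isomorphism) satisfies: (L1) every member of $\mathcal{F}^{(n)}$ is an epimorphic image of $\mathbb{L}$; (L2) every continuous map from $L$ to a finite discrete set factors through an epimorphism of $\mathbb{L}$ onto a member of $\mathcal{F}^{(n)}$; (L3) any two epimorphisms $\phi_1,\phi_2\colon\mathbb{L}\to\mathbb{A}\in\mathcal{F}^{(n)}$ satisfy $\phi_1=\phi_2\alpha$ for some automorphism $\alpha$ of $\mathbb{L}$. Connected components of a $\sigma$- or $\sigma^{(n)}$-structure are the connected components of the simple graph on its universe with an edge $\{a,b\}$ whenever $a\ne b$ and $(a,b)\in s_i$ for some $i$. *)

From HB Require Import structures.
From mathcomp Require Import all_boot all_order.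
From mathcomp Require Import all_classical.
From mathcomp Require Import topology.
Set Implicit Arguments. Unset Strict Implicit. Unset Printing Implicit Defensive.
Local Open Scope classical_set_scope.

Definition surj_rel (A : finType) (s : rel A) : Prop :=
  forall a, (exists b, s a b) /\ (exists c, s c a).

Definition outgoing (A : finType) (s : rel A) (a : A) : bool :=
  (#|[set b | s b a]| == 1)%N && (2 <= #|[set b | s a b]|)%N.

Definition orient (m : nat) (A : finType) (s : 'I_m -> rel A)
  (ib : 'I_m * bool) : rel A :=
  if ib.2 then (fun x y => s ib.1 y x) else s ib.1.

Definition inF (m : nat) (A : finType) (s : 'I_m -> rel A) : Prop :=
  [/\ (0 < #|A|)%N,
      (forall i, surj_rel (s i)),
      (forall a, #|[set ib : 'I_m * bool | outgoing (orient s ib) a]| = 1%N) &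
      (forall i a b, s i a b -> outgoing (s i) a || outgoing (fun x y => s i y x) b)].

Definition extU (n : nat) (A : finType) : finType := (A + 'I_n)%type.

Definition ext_rel (m n : nat) (A : finType) (s : 'I_m -> rel A)
  (i : 'I_m) : rel (extU n A) :=
  fun x y => match x, y with
             | inl a, inl b => s i a b
             | inr j, inr k => j == k
             | _, _ => false
             end.

Definition ext_const (n : nat) (A : finType) (j : 'I_n) : extU n A := inr j.

Definition img2 (T U : Type) (f : T -> U) (S : set (T * T)) : set (U * U) :=
  [set (f xy.1, f xy.2) | xy in S].

Definition cont_to_discrete (T : topologicalType) (X : Type) (f : T -> X) : Prop :=
  forall x : X, open (f @^-1` [set x]).

Definition epi_ext (m n : nat) (T : topologicalType)
  (sL : 'I_m -> set (T * T)) (pL : 'I_n -> T)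
  (A : finType) (s : 'I_m -> rel A) (phi : T -> extU n A) : Prop :=
  [/\ cont_to_discrete phi,
      (forall y : extU n A, exists x, phi x = y),
      (forall i, img2 phi (sL i) = [set xy | @ext_rel m n A s i xy.1 xy.2]) &
      (forall j, phi (pL j) = @ext_const n A j)].

Definition automorphism (m n : nat) (T : topologicalType)
  (sL : 'I_m -> set (T * T)) (pL : 'I_n -> T) (alpha : T -> T) : Prop :=
  exists beta : T -> T,
    [/\ cancel alpha beta /\ cancel beta alpha,
        continuous alpha, continuous beta,
        (forall i, img2 alpha (sL i) = sL i) &
        (forall j, alpha (pL j) = pL j)].

Definition top_structure (m n : nat) (T : topologicalType)
  (sL : 'I_m -> set (T * T)) (pL : 'I_n -> T) : Prop :=
  [/\ zero_dimensional T, compact [set: T], @second_countable T &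
      (forall i, closed (sL i))].

Definition fraisse_limit (m n : nat) (T : topologicalType)
  (sL : 'I_m -> set (T * T)) (pL : 'I_n -> T) : Prop :=
  [/\ top_structure sL pL,
      (forall (A : finType) (s : 'I_m -> rel A), inF s ->
        exists phi : T -> extU n A, epi_ext sL pL s phi),
      (forall (X : finType) (f : T -> X), cont_to_discrete f ->
        exists (A : finType) (s : 'I_m -> rel A) (phi : T -> extU n A)
               (g : extU n A -> X),
          [/\ inF s, epi_ext sL pL s phi & forall x, f x = g (phi x)]) &
      (forall (A : finType) (s : 'I_m -> rel A) (phi1 phi2 : T -> extU n A),
        inF s -> epi_ext sL pL s phi1 -> epi_ext sL pL s phi2 ->
        exists alpha : T -> T,
          automorphism sL pL alpha /\ forall x, phi1 x = phi2 (alpha x))].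

(* c is a union of connected components of the graph with an edge {a,b}
   whenever a <> b and (a,b) in some s_i: i.e. c is closed under adjacency *)
Definition union_of_components (m : nat) (T : Type)
  (sL : 'I_m -> set (T * T)) (c : set T) : Prop :=
  forall (i : 'I_m) (a b : T), sL i (a, b) -> (c a <-> c b).

From HB Require Import structures.
From mathcomp Require Import all_boot all_order.
From mathcomp Require Import all_classical.
From mathcomp Require Import topology.
Local Open Scope classical_set_scope.

(* Apply (L2) to the indicator of b: it factors through an epimorphism phi of
   L onto some A^(n).  The fiber of phi over the constant i is clopen, contains
   p_i, lies in b because the indicator is constant on it, and is a union of
   connected components because in A^(n) the point i is related only to
   itself. *)

Lemma clopen_fiber {T : topologicalType} {X : Type} (f : T -> X) (y : X) :
  cont_to_discrete f -> clopen (f @^-1` [set y]).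
Proof.
move=> cf; split; first exact: cf.
have -> : f @^-1` [set y] = ~` (\bigcup_(z in ~` [set y]) f @^-1` [set z]).
  apply/seteqP; split => x /=.
    by move=> fxy [z /= nzy]; rewrite fxy => /esym.
  by move=> nf; apply: contrapT => nfy; apply: nf; exists (f x).
by apply: open_closedC; apply: bigcup_open => z _; exact: cf.
Qed.

Lemma cont_to_discrete_indicator {T : topologicalType} {b : set T} :
  clopen b -> cont_to_discrete (fun x => `[< b x >]).
Proof.
case=> ob cb; case.
  suff -> : (fun x => `[< b x >]) @^-1` [set true] = b by [].
  by apply/seteqP; split => x /= /asboolP.
suff -> : (fun x => `[< b x >]) @^-1` [set false] = ~` b by exact: closed_openC.
by apply/seteqP; split => x /=; [move/asboolPn | move/asboolPn/negbTE].
Qed.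

Lemma ext_rel_inr_iff {m n : nat} {A : finType} (s : 'I_m -> rel A)
    (k : 'I_m) (j : 'I_n) (x y : extU n A) :
  ext_rel s k x y -> (x = inr j <-> y = inr j).
Proof. by case: x => [u|u]; case: y => [v|v] //= /eqP ->. Qed.

Lemma epi_ext_rel {m n : nat} {T : topologicalType}
    {sL : 'I_m -> set (T * T)} {pL : 'I_n -> T} {A : finType}
    {s : 'I_m -> rel A} {phi : T -> extU n A} (k : 'I_m) (a b : T) :
  epi_ext sL pL s phi -> sL k (a, b) -> ext_rel s k (phi a) (phi b).
Proof.
case=> _ _ himg _ sab.
have : img2 phi (sL k) (phi a, phi b) by exists (a, b).
by rewrite himg.
Qed.

Lemma union_of_components_epi_ext_fiber_const {m n : nat} {T : topologicalType}
    {sL : 'I_m -> set (T * T)} {pL : 'I_n -> T} {A : finType}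
    {s : 'I_m -> rel A} {phi : T -> extU n A} (j : 'I_n) :
  epi_ext sL pL s phi -> union_of_components sL (phi @^-1` [set inr j]).
Proof.
by move=> ephi k a b sab; apply: ext_rel_inr_iff; exact: epi_ext_rel ephi sab.
Qed.

Theorem lemma3p6 (m n : nat) (T : topologicalType)
  (sL : 'I_m -> set (T * T)) (pL : 'I_n -> T) :
  fraisse_limit sL pL ->
  forall (i : 'I_n) (b : set T), clopen b -> b (pL i) ->
  exists c : set T,
    [/\ clopen c, c (pL i), c `<=` b & union_of_components sL c].
Proof.
move=> [_ _ L2 _] i b clb bpi.
have [A [s [phi [g [_ ephi fg]]]]] := L2 _ _ (cont_to_discrete_indicator clb).
have [cphi _ _ hp] := ephi.
exists (phi @^-1` [set inr i]); split.
- exact: clopen_fiber cphi.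
- by rewrite /= hp.
- move=> x /= phix.
  have bx : `[< b x >] = `[< b (pL i) >] by rewrite (fg x) (fg (pL i)) phix hp.
  by apply/asboolP; rewrite bx; apply/asboolP.
- exact: union_of_components_epi_ext_fiber_const ephi.
Qed.
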